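(* Let $M_1$ and $M_2$ be smooth connected manifolds and $\Gamma\subset\mathrm{Diff}(M_1)\times\mathrm{Diff}(M_2)$ a group of diffeomorphisms of $M_1\times M_2$ that is of quotient type. Then $\Gamma$ is properly discontinuous.
   Context: A group $\Gamma$ of diffeomorphisms of a manifold $M$ is properly discontinuous if (PD1) each $p\in M$ has a neighbourhood $U$ with $\gamma(U)\cap U=\emptyset$ for all $\gamma\in\Gamma\setminus\{1\}$, and (PD2) any two points $p,q$ not in the same $\Gamma$-orbit have neighbourhoods $U_p,U_q$ with $\gamma(U_p)\cap U_q=\emptyset$ for all $\gamma\in\Gamma$. For $\Gamma\subset\mathrm{Diff}(M_1)\times\mathrm{Diff}(M_2)$ let $\Gamma_i$ be its projection to $\mathrm{Diff}(M_i)$ and, for $\sigma\in\Gamma_2$, $\Gamma_\sigma:=\{\gamma\in\Gamma_1:(\gamma,\sigma)\in\Gamma\}$. $\Gamma$ is of quotient type if (i) $\Gamma_2$ is properly discontinuous, (ii) $\Gamma_{\mathrm{Id}_{M_2}}\subset\Gamma_1$ satisfies (PD1), and (iii) $\Gamma_\sigma\subset\Gamma_1$ satisfies (PD2) (in the sense: points of $M_1$ not related by an element of $\Gamma_\sigma$ have neighbourhoods $U,V$ with $\gamma(U)\cap V=\emptyset$ for all $\gamma\in\Gamma_\sigma$) for all $\sigma\in\Gamma_2$; or if the same holds with the roles of $M_1$ and $M_2$ exchanged. *)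

From mathcomp Require Import all_boot.
From mathcomp Require Import boolp classical_sets topology.
Set Implicit Arguments. Unset Strict Implicit. Unset Printing Implicit Defensive.
Local Open Scope classical_set_scope.

(* f is a homeomorphism of T (stand-in for "diffeomorphism") *)
Definition is_homeo (T : topologicalType) (f : T -> T) : Prop :=
  continuous f /\ exists g : T -> T, [/\ continuous g, cancel f g & cancel g f].

Definition PD1 (T : topologicalType) (G : set (T -> T)) : Prop :=
  forall p : T, exists U : set T, nbhs p U /\
    forall g, G g -> g <> id -> g @` U `&` U = set0.

Definition PD2 (T : topologicalType) (G : set (T -> T)) : Prop :=
  forall p q : T, ~ (exists g, G g /\ g p = q) ->
    exists U V : set T, [/\ nbhs p U, nbhs q V &
      forall g, G g -> g @` U `&` V = set0].

Definition properly_discontinuous (T : topologicalType) (G : set (T -> T)) :=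
  PD1 G /\ PD2 G.

Definition diff_group (M1 M2 : topologicalType)
    (Gam : set ((M1 -> M1) * (M2 -> M2))) : Prop :=
  [/\ (forall a, Gam a -> is_homeo a.1 /\ is_homeo a.2),
      Gam (id, id),
      (forall a b, Gam a -> Gam b -> Gam (a.1 \o b.1, a.2 \o b.2)) &
      (forall a, Gam a -> exists b, Gam b /\
         [/\ b.1 \o a.1 = id, b.2 \o a.2 = id, a.1 \o b.1 = id & a.2 \o b.2 = id])].

Section Proj.
Variables (M1 M2 : topologicalType) (Gam : set ((M1 -> M1) * (M2 -> M2))).
Definition proj1_grp : set (M1 -> M1) := [set g | exists s, Gam (g, s)].
Definition proj2_grp : set (M2 -> M2) := [set s | exists g, Gam (g, s)].
Definition fiber1 (s : M2 -> M2) : set (M1 -> M1) := [set g | Gam (g, s)].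
Definition fiber2 (g : M1 -> M1) : set (M2 -> M2) := [set s | Gam (g, s)].

Definition quotient_type12 : Prop :=
  [/\ properly_discontinuous proj2_grp, PD1 (fiber1 id) &
      forall s, proj2_grp s -> PD2 (fiber1 s)].
Definition quotient_type21 : Prop :=
  [/\ properly_discontinuous proj1_grp, PD1 (fiber2 id) &
      forall g, proj1_grp g -> PD2 (fiber2 g)].
Definition quotient_type : Prop := quotient_type12 \/ quotient_type21.

Definition prod_action : set (M1 * M2 -> M1 * M2) :=
  [set (fun z => (a.1 z.1, a.2 z.2)) | a in Gam].
End Proj.

From mathcomp Require Import all_boot.
From mathcomp Require Import boolp classical_sets topology.
Local Open Scope classical_set_scope.

(** It suffices to separate points of M1 × M2 by rectangles U × V.
For PD1 at (p, q) take U from PD1 of Γ_id at p and V from PD1 of Γ_2 at q: an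
element (γ, σ) ≠ 1 moves V off itself if σ ≠ 1, and otherwise γ ∈ Γ_id \ {1}
moves U off itself.  For PD2 at (p1, q1), (p2, q2): if q2 ∉ Γ_2 q1, PD2 of Γ_2
gives the separating sets.  Otherwise q2 = σ0 q1, and on a PD1-neighbourhood W
of q1 the only σ ∈ Γ_2 with σ(W) ∩ σ0(W) ≠ ∅ is σ0, so it remains to separate
p1 from p2 under Γ_σ0, which is PD2 of Γ_σ0.  The other case of the definition
is the same after exchanging the factors. *)

Lemma image_disjointP (A B : Type) (f : A -> B) (U : set A) (V : set B) :
  f @` U `&` V = set0 <-> forall x, U x -> ~ V (f x).
Proof.
split=> [fUV x Ux Vfx | UV].
  have : (f @` U `&` V) (f x) by split=> //; exists x.
  by rewrite fUV.
by apply/seteqP; split=> // _ [[x Ux <-]]; apply: UV.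
Qed.

Lemma nbhs_homeo_image (T : topologicalType) (f : T -> T) (x : T) (W : set T) :
  is_homeo f -> nbhs x W -> nbhs (f x) (f @` W).
Proof.
move=> [_ [g [cg fK gK]]] Wx.
have : nbhs (f x) (g @^-1` W) by have := cg (f x); rewrite /continuous_at fK; apply.
by apply: filterS => y Wgy; exists (g y).
Qed.

Section RectangularSeparation.
Variables (M1 M2 : topologicalType) (Gam : set ((M1 -> M1) * (M2 -> M2))).

Definition rect_PD1 : Prop :=
  forall (p : M1) (q : M2), exists U V, [/\ nbhs p U, nbhs q V &
    forall a, Gam a -> a <> (id, id) -> forall x y, U x -> V y ->
      ~ (U (a.1 x) /\ V (a.2 y))].

Definition rect_PD2 : Prop :=
  forall (p1 p2 : M1) (q1 q2 : M2),
    ~ (exists a, [/\ Gam a, a.1 p1 = p2 & a.2 q1 = q2]) ->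
    exists U1 V1 U2 V2, [/\ nbhs p1 U1, nbhs q1 V1, nbhs p2 U2, nbhs q2 V2 &
      forall a, Gam a -> forall x y, U1 x -> V1 y -> ~ (U2 (a.1 x) /\ V2 (a.2 y))].

Lemma prod_action_PD1 : rect_PD1 -> PD1 (prod_action Gam).
Proof.
move=> sep [p q]; have [U [V [Up Vq UV]]] := sep p q.
exists (U `*` V); split; first by exists (U, V).
move=> _ [[a1 a2] Ga <-] a_id; apply/image_disjointP => -[x y] [Ux Vy].
have a_ne : (a1, a2) <> (id, id).
  by move=> [e1 e2]; apply: a_id; apply: funext => -[u v]; rewrite /= e1 e2.
exact: UV Ga a_ne x y Ux Vy.
Qed.

Lemma prod_action_PD2 : rect_PD2 -> PD2 (prod_action Gam).
Proof.
move=> sep [p1 q1] [p2 q2] not_rel.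
have [|U1 [V1 [U2 [V2 [U1p V1q U2p V2q UV]]]]] := sep p1 p2 q1 q2.
  move=> [a [Ga e1 e2]]; apply: not_rel.
  by exists (fun z => (a.1 z.1, a.2 z.2)); split; [exists a | rewrite /= e1 e2].
exists (U1 `*` V1), (U2 `*` V2); split; [by exists (U1, V1)|by exists (U2, V2)|].
by move=> _ [a Ga <-]; apply/image_disjointP => -[x y] [Ux Vy]; apply: UV.
Qed.

Definition swap_grp : set ((M2 -> M2) * (M1 -> M1)) := [set a | Gam (a.2, a.1)].

Lemma diff_group_swap : diff_group Gam -> diff_group swap_grp.
Proof.
move=> [homeo Gid Gcomp Ginv]; split=> //.
- by move=> a /homeo [].
- by move=> a b Ga Gb; apply: Gcomp Ga Gb.
- move=> a /Ginv [b [Gb [e1 e2 e3 e4]]].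
  by exists (b.2, b.1); split=> //; case: b Gb {e1 e2 e3 e4}.
Qed.

Lemma quotient_type21_swap : quotient_type21 Gam -> quotient_type12 swap_grp.
Proof. by []. Qed.

End RectangularSeparation.

Arguments rect_PD1 {M1 M2}.
Arguments rect_PD2 {M1 M2}.
Arguments swap_grp {M1 M2}.
Arguments diff_group_swap {M1 M2 Gam}.

Lemma rect_PD1_swap (M1 M2 : topologicalType)
    (Gam : set ((M1 -> M1) * (M2 -> M2))) :
  rect_PD1 (swap_grp Gam) -> rect_PD1 Gam.
Proof.
move=> sep p q; have [V [U [Vq Up VU]]] := sep q p.
exists U, V; split=> // -[a1 a2] Ga a_ne x y Ux Vy [Ua Va].
by apply: (VU (a2, a1)) Vy Ux _ => // -[e2 e1]; apply: a_ne; rewrite e1 e2.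
Qed.

Lemma rect_PD2_swap (M1 M2 : topologicalType)
    (Gam : set ((M1 -> M1) * (M2 -> M2))) :
  rect_PD2 (swap_grp Gam) -> rect_PD2 Gam.
Proof.
move=> sep p1 p2 q1 q2 not_rel.
have [|V1 [U1 [V2 [U2 [V1q U1p V2q U2p VU]]]]] := sep q1 q2 p1 p2.
  by move=> [[a2 a1] [Ga e2 e1]]; apply: not_rel; exists (a1, a2).
exists U1, V1, U2, V2; split=> // -[a1 a2] Ga x y Ux Vy [Ua Va].
exact: (VU (a2, a1)) Vy Ux _.
Qed.

Section QuotientType12.
Variables (M1 M2 : topologicalType) (Gam : set ((M1 -> M1) * (M2 -> M2))).
Hypothesis hG : diff_group Gam.

Let G2 := proj2_grp Gam.

Lemma proj2_grp_homeo {s} : G2 s -> is_homeo s.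
Proof. by case: hG => homeo _ _ _ [g /homeo []]. Qed.

Lemma proj2_grp_ldiv {s s0} : G2 s -> G2 s0 -> exists2 t, G2 t & s = s0 \o t.
Proof.
case: hG => _ _ Gcomp Ginv [g Gs] [g0 /Ginv [b [Gb [_ e2 _ e4]]]].
exists (b.2 \o s); first by exists (b.1 \o g); apply: Gcomp Gb Gs.
by rewrite compA e4.
Qed.

Lemma proj2_grp_rigid : PD1 G2 -> forall q : M2, exists2 W, nbhs q W &
  forall s s0 y z, G2 s -> G2 s0 -> W y -> W z -> s y = s0 z -> s = s0.
Proof.
move=> pd1 q; have [W [Wq W_free]] := pd1 q.
exists W => // s s0 y z Gs Gs0 Wy Wz e.
have [t Gt st] := proj2_grp_ldiv Gs Gs0; rewrite st in e *.
have [->|t_id] := pselect (t = id); first by [].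
have [_ [g [_ s0K _]]] := proj2_grp_homeo Gs0.
have ty : t y = z := can_inj s0K e.
by have /image_disjointP /(_ y Wy) := W_free t Gt t_id; rewrite ty.
Qed.

Lemma quotient_type12_rect_PD1 : quotient_type12 Gam -> rect_PD1 Gam.
Proof.
move=> [[pd1 _] pd1_id _] p q.
have [U [Up U_free]] := pd1_id p; have [V [Vq V_free]] := pd1 q.
exists U, V; split=> // -[a1 a2] Ga a_ne x y Ux Vy /= [Ua Va].
have [a2_id|a2_ne] := pselect (a2 = id).
  have a1_ne : a1 <> id by move=> a1_id; apply: a_ne; rewrite a1_id a2_id.
  have Fa1 : fiber1 Gam id a1 by rewrite /fiber1 /= -a2_id.
  by have /image_disjointP /(_ x Ux) := U_free _ Fa1 a1_ne.
have Ga2 : G2 a2 by exists a1.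
by have /image_disjointP /(_ y Vy) := V_free _ Ga2 a2_ne.
Qed.

Lemma quotient_type12_rect_PD2 : quotient_type12 Gam -> rect_PD2 Gam.
Proof.
move=> [[pd1 pd2] _ pd2_fiber] p1 p2 q1 q2 not_rel.
have [[s0 [Gs0 s0q]]|not_rel2] := pselect (exists s0, G2 s0 /\ s0 q1 = q2); last first.
  have [V1 [V2 [V1q V2q V_sep]]] := pd2 q1 q2 not_rel2.
  exists setT, V1, setT, V2; split=> //; try exact: filterT.
  move=> [a1 a2] Ga x y _ Vy [_]; have Ga2 : G2 a2 by exists a1.
  by have /image_disjointP /(_ y Vy) := V_sep _ Ga2.
have [W Wq W_rigid] := proj2_grp_rigid pd1 q1.
have [|U1 [U2 [U1p U2p U_sep]]] := pd2_fiber s0 Gs0 p1 p2.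
  by move=> [g [Fg gp]]; apply: not_rel; exists (g, s0).
exists U1, W, U2, (s0 @` W); split=> //.
  by rewrite -s0q; apply: nbhs_homeo_image (proj2_grp_homeo Gs0) Wq.
move=> [a1 a2] Ga x y Ux Wy /= [Ua [z Wz s0z]].
have a2_s0 : a2 = s0 by apply: (W_rigid a2 s0 y z) (esym s0z) => //; exists a1.
have Fa1 : fiber1 Gam s0 a1 by rewrite /fiber1 /= -a2_s0.
by have /image_disjointP /(_ x Ux) := U_sep _ Fa1.
Qed.

End QuotientType12.

Arguments quotient_type12_rect_PD1 {M1 M2 Gam}.
Arguments quotient_type12_rect_PD2 {M1 M2 Gam}.

Lemma quotient_type_rect_PD {M1 M2 : topologicalType}
    {Gam : set ((M1 -> M1) * (M2 -> M2))} :
  diff_group Gam -> quotient_type Gam -> rect_PD1 Gam /\ rect_PD2 Gam.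
Proof.
move=> hG [hq | /quotient_type21_swap hq].
  by split; [exact: quotient_type12_rect_PD1 hq |
             exact: quotient_type12_rect_PD2 hG hq].
have hG' := diff_group_swap hG.
split; [apply: rect_PD1_swap; exact: quotient_type12_rect_PD1 hq |
        apply: rect_PD2_swap; exact: quotient_type12_rect_PD2 hG' hq].
Qed.

Theorem lemma2 (M1 M2 : topologicalType)
  (hM1 : hausdorff_space M1) (hM2 : hausdorff_space M2)
  (cM1 : connected [set: M1]) (cM2 : connected [set: M2])
  (Gam : set ((M1 -> M1) * (M2 -> M2)))
  (hG : diff_group Gam) (hq : quotient_type Gam) :
  properly_discontinuous (prod_action Gam).
Proof.
have [sep1 sep2] := quotient_type_rect_PD hG hq.
by split; [apply: prod_action_PD1 | apply: prod_action_PD2].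
Qed.
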